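(* Let $V$ be a real vector space of dimension $2n$ and $F=(0=V_0\subset V_1\subset\dots\subset V_{2n}=V)$ a full flag with $\dim V_j=j$. Let $\Omega(F)$ be the space of symplectic forms $\omega$ on $V$ such that $V_j$ is $\omega$-isotropic for $j\le n$, $V_j$ is $\omega$-coisotropic for $j\ge n$, and $V_j^{\perp_\omega}=V_{2n-j}$ for $j\le n$. For $\omega\in\Omega(F)$ and $0\le j\le n-1$, $\omega$ induces a symplectic form on the quotient $V_{2n-j}/V_j$, hence an orientation of it. Then the map sending $\omega$ to this $n$-tuple of orientations induces a bijection between the set of connected components of $\Omega(F)$ and the set of all $n$-tuples of orientations of the spaces $V_{2n-j}/V_j$, $j=0,\dots,n-1$ (every tuple occurs), and each connected component of $\Omega(F)$ is convex. *)

From HB Require Import structures.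
From mathcomp Require Import all_boot all_order all_fingroup all_algebra.
From mathcomp Require Import all_classical all_reals all_analysis.
Set Implicit Arguments. Unset Strict Implicit. Unset Printing Implicit Defensive.
Import Order.TTheory GRing.Theory Num.Theory.
Local Open Scope ring_scope.
Local Open Scope classical_set_scope.

(* V = 'rV[R]_m (here m = 2n).  A bilinear form on V is given by its matrix W:
   omega(x, y) = x *m W *m y^T. *)

Definition rowN (R : pzRingType) (m : nat) (B : 'M[R]_m) (k : nat) : 'rV[R]_m :=
  oapp (fun i : 'I_m => row i B) 0 (insub k).

(* The full flag determined by an invertible matrix B :
   V_j = span of the first j rows of B (every full flag arises this way).
   flagsp B j is a square matrix whose row space is V_j. *)
Definition flagsp (R : pzRingType) (m : nat) (B : 'M[R]_m) (j : nat) : 'M[R]_m :=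
  \matrix_(i, k) (if (i < j)%N then B i k else 0).

(* omega-orthogonal of the row space of A : {x | x *m W *m a^T = 0 for all rows a of A} *)
Definition perpmx (R : fieldType) (m : nat) (W A : 'M[R]_m) : 'M[R]_m :=
  kermx (W *m A^T).

Definition symplectic (R : fieldType) (m : nat) (W : 'M[R]_m) : Prop :=
  W^T = - W /\ W \in unitmx.

Definition Omega (R : fieldType) (n : nat) (B : 'M[R]_(2 * n)) : set 'M[R]_(2 * n) :=
  [set W | symplectic W
     /\ (forall j, (j <= n)%N -> flagsp B j *m W *m (flagsp B j)^T = 0)
     /\ (forall j, (n <= j <= 2 * n)%N -> (perpmx W (flagsp B j) <= flagsp B j)%MS)
     /\ (forall j, (j <= n)%N -> (perpmx W (flagsp B j) == flagsp B (2 * n - j))%MS)].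

(* Evaluation of the top wedge power omega^(m/2) (up to a positive constant)
   on a family of m vectors, given the Gram values w a b = omega(v_a, v_b):
   sum_{s in S_m} sgn(s) prod_{i < m/2} w (s(2i)) (s(2i+1)). *)
Definition permN (m : nat) (s : 'S_m) (x : nat) : nat :=
  oapp (fun i : 'I_m => val (s i)) 0 (insub x).

Definition wedge_top (R : pzRingType) (m : nat) (w : nat -> nat -> R) : R :=
  \sum_(s : 'S_m) (-1) ^+ s * \prod_(i < m./2) w (permN s (2 * i)) (permN s (2 * i + 1)).

(* Orientation of V_{2n-j}/V_j induced by omega, encoded relative to the
   reference basis (images of rows j, ..., 2n-j-1 of B): true = positive,
   i.e. the volume form omega^(n-j) of the induced symplectic form is
   positive on the reference basis. *)
Definition induced_orientation (R : realFieldType) (n : nat) (B W : 'M[R]_(2 * n))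
    (j : nat) : bool :=
  0 < wedge_top (2 * (n - j))
        (fun a b => (rowN B (j + a) *m W *m (rowN B (j + b))^T) 0 0).

From HB Require Import structures.
From mathcomp Require Import all_boot all_order all_fingroup all_algebra.
From mathcomp Require Import all_classical all_reals all_analysis.
From mathcomp Require Import zify lra.
Set Implicit Arguments. Unset Strict Implicit. Unset Printing Implicit Defensive.
Import Order.TTheory GRing.Theory Num.Theory.
Local Open Scope ring_scope.
Import numFieldNormedType.Exports.

(* Write the form omega in the basis b_0, ..., b_(2n-1) given by the rows of B,
   so that V_j is spanned by b_0, ..., b_(j-1).  Then omega lies in Omega(F)
   iff it is skew, its Gram matrix is anti-triangular (omega(b_a, b_b) = 0 for
   a + b < 2n - 1), and its n "pivots" omega(b_i, b_(2n-1-i)), i < n, are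
   nonzero (OmegaE).  On the quotient V_(2n-j)/V_j the top wedge power of the
   induced form collapses to a product of pivots: in the Pfaffian-type sum only
   the anti-diagonal pairings survive and they all contribute the same term
   (wedge_top_antitriangular).  So the orientations are read off the signs of
   the pivots, and conversely by telescoping (orientations_same_signs); an
   anti-diagonal Gram matrix realizes any signs (orientations_surjective).
   Finally the pivots are continuous, linear in omega and nonvanishing on
   Omega(F), so its components are exactly the convex sets of forms with a
   given sign pattern (component_same_signs, component_convex). *)

Lemma permN_ord m (s : 'S_m) (x : 'I_m) : permN s x = s x.
Proof. by rewrite /permN; case: insubP => [y _ /val_inj ->|]; rewrite ?ltn_ord. Qed.

Lemma sum_by_pairs (f : nat -> nat) n :
  (\sum_(0 <= x < 2 * n) f x = \sum_(0 <= i < n) (f (2 * i) + f (2 * i + 1)))%N.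
Proof.
elim: n => [|n IH]; first by rewrite !big_geq.
by rewrite (_ : 2 * n.+1 = (2 * n).+2)%N ?mulnS // !big_nat_recr //= IH addnA addn1.
Qed.

Section AntidiagonalPairings.
Variable k : nat.
Local Notation m := (2 * k)%N.

Fact pair_fst_subproof (i : 'I_k) : (2 * i < m)%N. Proof. by have := ltn_ord i; lia. Qed.
Fact pair_snd_subproof (i : 'I_k) : (2 * i + 1 < m)%N. Proof. by have := ltn_ord i; lia. Qed.
Fact pair_of_subproof (x : 'I_m) : (x./2 < k)%N. Proof. by have := ltn_ord x; lia. Qed.
Definition pair_fst (i : 'I_k) : 'I_m := Ordinal (pair_fst_subproof i).
Definition pair_snd (i : 'I_k) : 'I_m := Ordinal (pair_snd_subproof i).
Definition pair_of (x : 'I_m) : 'I_k := Ordinal (pair_of_subproof x).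

Lemma pair_of_fst i : pair_of (pair_fst i) = i. Proof. by apply: val_inj => /=; lia. Qed.
Lemma pair_of_snd i : pair_of (pair_snd i) = i. Proof. by apply: val_inj => /=; lia. Qed.
Lemma odd_pair_fst i : odd (pair_fst i) = false. Proof. by rewrite /=; lia. Qed.
Lemma odd_pair_snd i : odd (pair_snd i) = true. Proof. by rewrite /=; lia. Qed.
Lemma pair_fst_inj : injective pair_fst.
Proof. by move=> i j /(congr1 val) /= e; apply: val_inj => /=; lia. Qed.
Lemma pair_snd_inj : injective pair_snd.
Proof. by move=> i j /(congr1 val) /= e; apply: val_inj => /=; lia. Qed.
Lemma pair_fst_snd i j : pair_fst i != pair_snd j.
Proof. by apply/eqP => /(congr1 val) /=; lia. Qed.

Lemma pairP (P : 'I_m -> Prop) :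
  (forall i, P (pair_fst i)) -> (forall i, P (pair_snd i)) -> forall x, P x.
Proof.
move=> Pfst Psnd x.
have -> : x = if odd x then pair_snd (pair_of x) else pair_fst (pair_of x).
  by apply: val_inj; case: ifP => /= ?; lia.
by case: ifP.
Qed.

Definition lift_pairs_fun (r : 'S_k) (x : 'I_m) : 'I_m :=
  if odd x then pair_snd (r (pair_of x)) else pair_fst (r (pair_of x)).

Lemma lift_pairs_fun_inj r : injective (lift_pairs_fun r).
Proof.
apply: pairP => i; apply: pairP => j;
  rewrite /lift_pairs_fun ?odd_pair_fst ?odd_pair_snd ?pair_of_fst ?pair_of_snd.
- by move/pair_fst_inj/perm_inj ->.
- by move/eqP; rewrite (negbTE (pair_fst_snd _ _)).
- by move/eqP; rewrite eq_sym (negbTE (pair_fst_snd _ _)).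
- by move/pair_snd_inj/perm_inj ->.
Qed.

Definition lift_pairs r : 'S_m := perm (@lift_pairs_fun_inj r).

Lemma lift_pairs_fst r i : lift_pairs r (pair_fst i) = pair_fst (r i).
Proof. by rewrite permE /lift_pairs_fun odd_pair_fst pair_of_fst. Qed.
Lemma lift_pairs_snd r i : lift_pairs r (pair_snd i) = pair_snd (r i).
Proof. by rewrite permE /lift_pairs_fun odd_pair_snd pair_of_snd. Qed.

(* Lifting is a group morphism, and lifts of transpositions are products of
   two transpositions; hence every lift is even. *)
Lemma lift_pairsM r1 r2 : lift_pairs (r1 * r2)%g = (lift_pairs r1 * lift_pairs r2)%g.
Proof.
apply/permP; apply: pairP => i;
  by rewrite permM ?lift_pairs_fst ?lift_pairs_snd permM.
Qed.

Lemma lift_pairs_tperm a b :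
  lift_pairs (tperm a b) = (tperm (pair_fst a) (pair_fst b) * tperm (pair_snd a) (pair_snd b))%g.
Proof.
apply/permP; apply: pairP => i; rewrite permM ?lift_pairs_fst ?lift_pairs_snd.
  by rewrite -(inj_tperm _ _ _ pair_fst_inj) [RHS]tpermD // eq_sym pair_fst_snd.
by rewrite [tperm (pair_fst a) _ _]tpermD ?pair_fst_snd // -(inj_tperm _ _ _ pair_snd_inj).
Qed.

Lemma odd_lift_pairs r : odd_perm (lift_pairs r) = false.
Proof.
have [ts -> _] := prod_tpermP r; elim: ts => [|[a b] ts IH].
  rewrite big_nil (_ : lift_pairs 1 = 1)%g ?odd_perm1 //.
  by apply/permP; apply: pairP => i; rewrite perm1 ?lift_pairs_fst ?lift_pairs_snd perm1.
rewrite big_cons lift_pairsM odd_permM IH lift_pairs_tperm odd_permM !odd_tperm /=.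
by rewrite (inj_eq pair_fst_inj) (inj_eq pair_snd_inj) addbb.
Qed.

(* The reference pairing: pair i is sent to the anti-diagonal cell (i, 2k-1-i). *)
Fact antidiag_subproof (x : 'I_m) : ((if odd x then m.-1 - x./2 else x./2) < m)%N.
Proof. by have := ltn_ord x; case: ifP; lia. Qed.
Definition antidiag_fun (x : 'I_m) : 'I_m := Ordinal (antidiag_subproof x).
Lemma antidiag_fun_inj : injective antidiag_fun.
Proof.
move=> x y /(congr1 val) /=; have := ltn_ord x; have := ltn_ord y.
by move=> ? ? e; apply: val_inj; move: e; case: ifP => ?; case: ifP => ? /= ?; lia.
Qed.
Definition antidiag_perm : 'S_m := perm antidiag_fun_inj.

Lemma antidiag_perm_fst i : val (antidiag_perm (pair_fst i)) = i.
Proof. by rewrite permE /= (_ : odd (2 * i) = false) /=; lia. Qed.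
Lemma antidiag_perm_snd i : val (antidiag_perm (pair_snd i)) = (m.-1 - i)%N.
Proof. by rewrite permE /= (_ : odd (2 * i + 1) = true) /=; lia. Qed.

Definition antidiagonal (s : 'S_m) :=
  [forall i : 'I_k, (s (pair_fst i) + s (pair_snd i) == m.-1)%N].

Lemma antidiagonal_antidiag_perm : antidiagonal antidiag_perm.
Proof.
apply/forallP => i; rewrite antidiag_perm_fst antidiag_perm_snd.
by apply/eqP; have := ltn_ord i; lia.
Qed.

Lemma sum_pair_values (s : 'S_m) :
  (\sum_(i < k) (s (pair_fst i) + s (pair_snd i)) = k * m.-1)%N.
Proof.
have -> : (\sum_(i < k) (s (pair_fst i) + s (pair_snd i)) = \sum_(x < m) s x)%N.
  rewrite (eq_bigr (fun x : 'I_m => permN s x)); last by move=> x _; rewrite permN_ord.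
  rewrite -(big_mkord xpredT (permN s)) sum_by_pairs big_mkord.
  by apply: eq_bigr => i _; rewrite -(permN_ord s (pair_fst i)) -(permN_ord s (pair_snd i)).
rewrite [RHS](_ : _ = \sum_(x < m) x)%N; first by rewrite [RHS](reindex_perm s).
rewrite -(big_mkord xpredT (fun x => x)) bin2_sum bin2 -mulnA.
by rewrite [X in X./2]mul2n doubleK.
Qed.

Variables (R : comPzRingType) (w : nat -> nat -> R).
Hypothesis w_antitriangular :
  forall a b, (a < m)%N -> (b < m)%N -> (a + b < m.-1)%N -> w a b = 0.
Hypothesis w_skew : forall a b, (a < m)%N -> (b < m)%N -> w a b = - w b a.

Definition pairing_term (s : 'S_m) :=
  (-1) ^+ s * \prod_(i < k) w (s (pair_fst i)) (s (pair_snd i)).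

Lemma wedge_topE : wedge_top m w = \sum_(s : 'S_m) pairing_term s.
Proof.
apply: eq_bigr => s _; congr (_ * _).
rewrite (_ : m./2 = k); last by lia.
rewrite -(big_mkord xpredT (fun i => w (permN s (2 * i)) (permN s (2 * i + 1)))) big_mkord.
by apply: eq_bigr => i _; rewrite -(permN_ord s (pair_fst i)) -(permN_ord s (pair_snd i)).
Qed.

(* Only anti-diagonal pairings contribute: otherwise some pair sum is below
   2k-1, since the pair sums are all >= 2k-1 only if they all equal 2k-1. *)
Lemma pairing_term_nonantidiagonal s : ~~ antidiagonal s -> pairing_term s = 0.
Proof.
move=> not_anti.
have [/existsP [i low]|] := boolP [exists i : 'I_k, (s (pair_fst i) + s (pair_snd i) < m.-1)%N].
  by rewrite /pairing_term (bigD1 i) //= w_antitriangular ?ltn_ord // mul0r mulr0.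
move=> /existsPn high; case/negP: not_anti; apply/forallP => i.
have ge (j : 'I_k) : (m.-1 <= s (pair_fst j) + s (pair_snd j))%N by rewrite leqNgt high.
have [_] := leqif_sum (fun j (_ : true) => leqif_eq (ge j)).
rewrite sum_pair_values sum_nat_const card_ord eqxx => /esym/forallP all_eq.
by rewrite eq_sym (implyP (all_eq i)).
Qed.

(* Swapping the two slots of a pair preserves the term (sign and w both flip). *)
Definition swap_pair (i : 'I_k) : 'S_m := tperm (pair_fst i) (pair_snd i).

Lemma swap_pair_fst i j : j != i -> swap_pair i (pair_fst j) = pair_fst j.
Proof. by move=> ji; rewrite tpermD ?(inj_eq pair_fst_inj) 1?eq_sym ?pair_fst_snd. Qed.
Lemma swap_pair_snd i j : j != i -> swap_pair i (pair_snd j) = pair_snd j.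
Proof. by move=> ji; rewrite tpermD ?pair_fst_snd // (inj_eq pair_snd_inj) eq_sym. Qed.

Lemma pairing_term_swap i s : pairing_term (swap_pair i * s)%g = pairing_term s.
Proof.
rewrite /pairing_term odd_mul_tperm pair_fst_snd signr_addb.
rewrite (bigD1 i) // [in RHS](bigD1 i) //= !permM tpermL tpermR.
rewrite w_skew ?ltn_ord // (eq_bigr (fun j => w (s (pair_fst j)) (s (pair_snd j)))).
  by rewrite expr1 mulN1r mulNr mulNr mulrN opprK.
by move=> j ji; rewrite !permM swap_pair_fst // swap_pair_snd.
Qed.

Lemma antidiagonal_swap i s : antidiagonal s -> antidiagonal (swap_pair i * s)%g.
Proof.
move=> /forallP anti; apply/forallP => j; rewrite !permM.
have [->|ji] := eqVneq j i; first by rewrite tpermL tpermR addnC.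
by rewrite swap_pair_fst // swap_pair_snd.
Qed.

Definition inverted (s : 'S_m) := [set i : 'I_k | (s (pair_snd i) < s (pair_fst i))%N].

Lemma inverted_swap i s : i \in inverted s -> inverted (swap_pair i * s)%g \subset inverted s :\ i.
Proof.
rewrite inE => inv_i; apply/fintype.subsetP => j; rewrite !inE !permM.
have [->|ji] := eqVneq j i; first by rewrite tpermL tpermR ltnNge ltnW.
by rewrite swap_pair_fst // swap_pair_snd.
Qed.

(* An anti-diagonal pairing without inverted pairs is the reference pairing
   composed with an (even) permutation of the pairs. *)
Lemma pairing_term_sorted s :
  antidiagonal s -> #|inverted s| = 0%N -> pairing_term s = pairing_term antidiag_perm.
Proof.
move=> /forallP anti no_inv.
have fst_low i : (s (pair_fst i) < k)%N.
  have := eqP (anti i); have : i \notin inverted s by rewrite (card0_eq no_inv).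
  by rewrite inE -leqNgt; have := ltn_ord i; lia.
pose rf i := Ordinal (fst_low i).
have rf_inj : injective rf by move=> i j /(congr1 val) /= /val_inj /perm_inj /pair_fst_inj.
pose r := perm rf_inj.
have rE i : val (r i) = s (pair_fst i) by rewrite permE.
have sE : s = (lift_pairs r * antidiag_perm)%g.
  apply/permP; apply: pairP => i; rewrite permM ?lift_pairs_fst ?lift_pairs_snd; apply: val_inj.
    by rewrite antidiag_perm_fst rE.
  by rewrite antidiag_perm_snd rE -(eqP (anti i)) addKn.
rewrite /pairing_term {1}sE odd_permM odd_lift_pairs /=; congr (_ * _).
rewrite [RHS](reindex_perm r); apply: eq_bigr => i _.
by rewrite antidiag_perm_fst antidiag_perm_snd rE; congr w; have := eqP (anti i); lia.
Qed.

(* All anti-diagonal pairings contribute the same term: sort the pairs one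
   swap at a time, by induction on the number of inverted pairs. *)
Lemma pairing_term_antidiagonal s :
  antidiagonal s -> pairing_term s = pairing_term antidiag_perm.
Proof.
have [N] := ubnP #|inverted s|; elim: N s => // N IH s card_inv anti.
have [no_inv|/card_gt0P [i inv_i]] := posnP #|inverted s|.
  exact: pairing_term_sorted.
rewrite -(pairing_term_swap i); apply: IH; last exact: antidiagonal_swap.
have := subset_leq_card (inverted_swap inv_i).
by rewrite (cardsD1 i (inverted s)) inv_i in card_inv; lia.
Qed.

Lemma wedge_top_antitriangular : wedge_top m w =
  ((-1) ^+ antidiag_perm * \prod_(i < k) w i (m.-1 - i)%N) *+ #|[pred s | antidiagonal s]|.
Proof.
rewrite wedge_topE (bigID antidiagonal) /=.
rewrite [X in _ + X]big1 ?addr0; last by move=> s /pairing_term_nonantidiagonal.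
rewrite (eq_bigr (fun _ => pairing_term antidiag_perm)); last by move=> s /pairing_term_antidiagonal.
rewrite sumr_const /pairing_term; congr (_ * _ *+ _).
by apply: eq_bigr => i _; rewrite antidiag_perm_fst antidiag_perm_snd.
Qed.

End AntidiagonalPairings.

Lemma antidiagonal_count_gt0 k : (0 < #|[pred s : 'S_(2 * k) | antidiagonal s]|)%N.
Proof. by apply/card_gt0P; exists (antidiag_perm k); exact: antidiagonal_antidiag_perm. Qed.

(* A matrix vanishing strictly above its anti-diagonal is invertible iff its
   anti-diagonal entries are nonzero: reversing its columns makes it triangular. *)
Lemma unitmx_antitriangular (R : fieldType) m (A : 'M[R]_m) :
  (forall i j : 'I_m, (i + j < m.-1)%N -> A i j = 0) ->
  (A \in unitmx) = [forall i, A i (rev_ord i) != 0].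
Proof.
move=> A_anti; pose r := perm (@rev_ord_inj m).
have r_trig : is_trig_mx (col_perm r A).
  by apply/is_trig_mxP => i j ij; rewrite mxE permE A_anti //=; have := ltn_ord j; lia.
have -> : (A \in unitmx) = (\det (col_perm r A) != 0).
  by rewrite unitmxE unitfE col_permE det_mulmx det_perm mulf_eq0 signr_eq0 orbF.
rewrite (det_trig r_trig); apply/prodf_neq0/forallP => [nz i|nz i _].
  by have := nz i isT; rewrite mxE permE.
by rewrite mxE permE nz.
Qed.

Lemma prod_lt0 (R : realDomainType) (I : Type) (r : seq I) (F : I -> R) :
  (forall i, F i != 0) -> (\prod_(i <- r) F i < 0) = \big[addb/false]_(i <- r) (F i < 0).
Proof.
move=> F_neq0; elim: r => [|i r IH]; first by rewrite !big_nil ltr10.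
have prod_neq0 : \prod_(j <- r) F j != 0.
  by apply: (big_ind (fun x => x != 0)); [exact: oner_neq0|exact: mulf_neq0|].
by rewrite !big_cons mulr_lt0 F_neq0 prod_neq0 IH.
Qed.

Lemma telescope_addb (p : nat -> bool) j k :
  \big[addb/false]_(i < k) (p (j + i)%N (+) p (j + i).+1) = p j (+) p (j + k)%N.
Proof.
elim: k => [|k IH]; first by rewrite big_ord0 addn0 addbb.
by rewrite big_ord_recr /= IH -addbA addnS; congr (_ (+) _); rewrite addbA addbb.
Qed.

Lemma convex_comb_lt0 (R : realDomainType) (x y t : R) :
  0 <= t <= 1 -> x < 0 -> y < 0 -> t * x + (1 - t) * y < 0.
Proof. by move=> /andP [t0 t1] x_lt0 y_lt0; nra. Qed.

Lemma convex_comb_same_sign (R : realDomainType) (x y t : R) : 0 <= t <= 1 ->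
  x != 0 -> y != 0 -> (x < 0) = (y < 0) ->
  t * x + (1 - t) * y != 0 /\ (t * x + (1 - t) * y < 0) = (x < 0).
Proof.
move=> t01 x0 y0 xy.
have [x_lt0|x_gt0|x_eq0] := ltgtP x 0; last by rewrite x_eq0 eqxx in x0.
  have y_lt0 : y < 0 by rewrite -xy.
  have z_lt0 := convex_comb_lt0 t01 x_lt0 y_lt0.
  by rewrite ltr0_neq0.
have y_gt0 : 0 < y by move: xy y0; rewrite (lt_gtF x_gt0); case: (ltgtP y 0).
have z_gt0 : 0 < t * x + (1 - t) * y.
  rewrite -oppr_lt0 opprD -!mulrN.
  by apply: convex_comb_lt0; rewrite ?oppr_lt0.
by rewrite lt0r_neq0 // (lt_gtF z_gt0).
Qed.

Lemma bilinear_continuous (R : realType) m (u v : 'rV[R]_m) :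
  continuous (fun W : 'M[R]_m => (u *m W *m v^T) 0 0).
Proof.
have -> : (fun W : 'M[R]_m => (u *m W *m v^T) 0 0) =
    (fun W => \sum_(l < m) \sum_(t < m) (u 0 t * v 0 l) * W t l).
  apply: funext => W; rewrite mxE; apply: eq_bigr => l _.
  by rewrite [(u *m W) _ _]mxE big_distrl /=; apply: eq_bigr => t _; rewrite !mxE mulrAC.
apply: continuous_big; first exact: add_continuous.
move=> l _; apply: continuous_big; first exact: add_continuous.
move=> t _ W; apply: (@continuousM _ _ (fun=> u 0 t * v 0 l) (fun W : 'M[R]_m => W t l)).
  exact: cst_continuous.
exact: coord_continuous.
Qed.

Section ConnectednessFacts.
Local Open Scope classical_set_scope.

Lemma segment_image_connected (R : realType) (V : normedModType R) (x y : V) :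
  connected ((fun t : R => t *: x + (1 - t) *: y) @` `[0, 1]).
Proof.
apply: connected_continuous_connected; first exact: segment_connected.
apply: continuous_subspaceT => t.
apply: (@continuousD _ _ _ (fun t : R => t *: x) (fun t : R => (1 - t) *: y)).
  by apply: (@continuousZr_tmp _ _ _ id); exact: cvg_id.
apply: (@continuousZr_tmp _ _ _ (fun t : R => 1 - t)).
by apply: (@continuousB _ R^o _ (fun=> 1) id); [exact: cst_continuous|exact: cvg_id].
Qed.

(* A continuous real function that does not vanish on A keeps its sign on
   each connected component of A, by the intermediate value property. *)
Lemma connected_component_sign (T : topologicalType) (R : realType) (A : set T)
    (f : T -> R) x y :
  continuous f -> (forall z, A z -> f z != 0) ->
  connected_component A x y -> (f x < 0) = (f y < 0).
Proof.
move=> f_cont f_neq0 [C [Cx CA C_conn] Cy].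
have fC_itv : is_interval (f @` C).
  apply/connected_intervalP; apply: connected_continuous_connected => //.
  exact: continuous_subspaceT.
have sign_stable a b : C a -> C b -> f a < 0 -> f b < 0.
  move=> Ca Cb fa_lt0; rewrite ltNge; apply/negP => fb_ge0.
  have [z Cz fz0] : (f @` C) 0.
    by apply: (fC_itv (f a) (f b)); [exists a|exists b|rewrite ltW].
  by have := f_neq0 z (CA z Cz); rewrite fz0 eqxx.
by apply/idP/idP; apply: sign_stable.
Qed.

End ConnectednessFacts.

Lemma pid_mulmx_entry (R : pzRingType) m p (A : 'M[R]_m) (a b : 'I_m) :
  (pid_mx p *m A) a b = if (a < p)%N then A a b else 0.
Proof.
rewrite mxE (bigD1 a) //= big1 ?addr0 => [|c ca]; rewrite mxE.
  by rewrite eqxx /=; case: ifP; rewrite ?mul1r ?mul0r.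
by rewrite (inj_eq val_inj) eq_sym (negbTE ca) mul0r.
Qed.

Lemma pid_mx_entry (R : comPzRingType) m p q (A : 'M[R]_m) (a b : 'I_m) :
  (pid_mx p *m A *m pid_mx q) a b = if (a < p)%N && (b < q)%N then A a b else 0.
Proof.
rewrite -[_ *m pid_mx q]trmxK trmx_mul tr_pid_mx mxE !pid_mulmx_entry mxE pid_mulmx_entry.
by case: (a < p)%N; case: (b < q)%N.
Qed.

Lemma flagspE (R : pzRingType) m (B : 'M[R]_m) j : flagsp B j = pid_mx j *m B.
Proof. by apply/matrixP => i l; rewrite pid_mulmx_entry mxE. Qed.

Lemma flagsp_mono (R : fieldType) m (B : 'M[R]_m) p q :
  (p <= q)%N -> (flagsp B p <= flagsp B q)%MS.
Proof.
move=> pq; rewrite !flagspE.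
have -> : pid_mx p = pid_mx p *m (pid_mx q : 'M[R]_m) :> 'M[R]_m.
  by rewrite mul_pid_mx pid_mx_minv (minn_idPl pq).
by rewrite -mulmxA submxMl.
Qed.

Section FlagAdaptedGram.
Variables (R : realType) (n : nat) (B : 'M[R]_(2 * n)).
Hypothesis B_unit : B \in unitmx.
Local Notation m := (2 * n)%N.
Implicit Types W : 'M[R]_m.

Definition gram W := B *m W *m B^T.
Definition gramN W (a b : nat) : R := (rowN B a *m W *m (rowN B b)^T) 0 0.

Definition antitriangular W :=
  forall a b, (a < m)%N -> (b < m)%N -> (a + b < m.-1)%N -> gramN W a b = 0.

Definition pivot W (i : nat) := gramN W i (m.-1 - i).

Lemma gramNE W (a b : 'I_m) : gramN W a b = gram W a b.
Proof.
have rowN_ord (x : 'I_m) : rowN B x = row x B.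
  by rewrite /rowN; case: insubP => [y _ /val_inj ->|]; rewrite ?ltn_ord.
by rewrite /gramN !rowN_ord -row_mul !mxE; apply: eq_bigr => l _; rewrite !mxE.
Qed.

Lemma gramN_skew W : W^T = - W ->
  forall a b, (a < m)%N -> (b < m)%N -> gramN W a b = - gramN W b a.
Proof.
move=> W_skew a b am bm.
rewrite (gramNE W (Ordinal am) (Ordinal bm)) (gramNE W (Ordinal bm) (Ordinal am)).
have gram_skew : (gram W)^T = - gram W.
  by rewrite /gram !trmx_mul trmxK mulmxA W_skew mulmxN mulNmx.
by have := congr1 (fun X : 'M[R]_m => X (Ordinal bm) (Ordinal am)) gram_skew; rewrite !mxE.
Qed.

Lemma gramN_comb W1 W2 s t a b :
  gramN (s *: W1 + t *: W2) a b = s * gramN W1 a b + t * gramN W2 a b.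
Proof. by rewrite /gramN mulmxDr mulmxDl -!scalemxAr -!scalemxAl !mxE. Qed.

Lemma flag_gram_entry W p q (a b : 'I_m) :
  (flagsp B p *m W *m (flagsp B q)^T) a b = if (a < p)%N && (b < q)%N then gram W a b else 0.
Proof. by rewrite !flagspE trmx_mul tr_pid_mx !mulmxA -2!(mulmxA (pid_mx p)) pid_mx_entry. Qed.

Lemma flag_orthogonalP W p q :
  reflect (forall a b : 'I_m, (a < p)%N -> (b < q)%N -> gram W a b = 0)
          (flagsp B p <= perpmx W (flagsp B q))%MS.
Proof.
rewrite /perpmx sub_kermx mulmxA; apply: (iffP eqP) => [block0 a b ap bq|block0].
  by move/matrixP/(_ a b): block0; rewrite flag_gram_entry ap bq /= => ->; rewrite mxE.
by apply/matrixP => a b; rewrite flag_gram_entry [RHS]mxE; case: ifP => // /andP [ap bq]; apply: block0.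
Qed.

Lemma rank_flagsp p : (p <= m)%N -> \rank (flagsp B p) = p.
Proof. by move=> pm; rewrite flagspE mxrankMfree ?row_free_unit // rank_pid_mx. Qed.

Lemma rank_perpmx W q : W \in unitmx -> (q <= m)%N -> \rank (perpmx W (flagsp B q)) = (m - q)%N.
Proof.
move=> W_unit qm; rewrite /perpmx mxrank_ker -mxrank_tr trmx_mul trmxK flagspE -mulmxA.
by rewrite mxrankMfree ?rank_pid_mx // row_free_unit unitmx_mul unitmx_tr B_unit W_unit.
Qed.

(* For a non-degenerate anti-triangular W, the orthogonal of V_q is V_(2n-q):
   the inclusion holds by anti-triangularity and both have dimension 2n - q. *)
Lemma perpmx_flagsp W q : W \in unitmx -> antitriangular W -> (q <= m)%N ->
  (perpmx W (flagsp B q) == flagsp B (m - q))%MS.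
Proof.
move=> W_unit W_anti qm.
have sub : (flagsp B (m - q) <= perpmx W (flagsp B q))%MS.
  by apply/flag_orthogonalP => a b aq bq; rewrite -gramNE W_anti //; lia.
have := (mxrank_leqif_eq sub).2; rewrite rank_flagsp ?leq_subr // rank_perpmx // eqxx.
by move=> /esym /andP [-> ->].
Qed.

(* A skew anti-triangular W is non-degenerate iff its n pivots are nonzero
   (the other half of the anti-diagonal is their negative). *)
Lemma unitmx_pivots W : W^T = - W -> antitriangular W ->
  (W \in unitmx) = [forall i : 'I_n, pivot W i != 0].
Proof.
move=> W_skew W_anti.
have -> : (W \in unitmx) = (gram W \in unitmx).
  by rewrite /gram !unitmx_mul unitmx_tr B_unit andbT.
rewrite unitmx_antitriangular => [|a b ab]; last by rewrite -gramNE W_anti.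
have rev_entry (i : 'I_m) : gram W i (rev_ord i) = gramN W i (m.-1 - i).
  by rewrite -gramNE /= (_ : m - i.+1 = m.-1 - i)%N //; lia.
apply/forallP/forallP => nz i.
  have im : (i < m)%N by have := ltn_ord i; lia.
  by have := nz (Ordinal im); rewrite rev_entry.
rewrite rev_entry; have [ilow|ihigh] := ltnP i n; first exact: (nz (Ordinal ilow)).
have jlow : (m.-1 - i < n)%N by have := ltn_ord i; lia.
have := nz (Ordinal jlow); rewrite /pivot /= subKn => [nz_j|]; last by have := ltn_ord i; lia.
by rewrite gramN_skew ?oppr_eq0 //; have := ltn_ord i; lia.
Qed.

Lemma perp_flag_antitriangular W : W^T = - W ->
  (forall j, (j <= n)%N -> (flagsp B (m - j) <= perpmx W (flagsp B j))%MS) ->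
  antitriangular W.
Proof.
move=> W_skew W_perp a b am bm ab.
wlog bn : a b am bm ab / (b < n)%N.
  move=> sym; have [bn|nb] := ltnP b n; first exact: sym.
  by rewrite gramN_skew // sym ?oppr0 //; lia.
have /flag_orthogonalP block0 := W_perp b.+1 bn.
by rewrite (gramNE W (Ordinal am) (Ordinal bm)) block0 //=; lia.
Qed.

Lemma OmegaE W :
  Omega B W <-> [/\ W^T = - W, antitriangular W & forall i : 'I_n, pivot W i != 0].
Proof.
split => [[[W_skew W_unit] [_ [_ W_perp]]]|[W_skew W_anti W_piv]].
  have W_anti : antitriangular W.
    by apply: perp_flag_antitriangular => // j jn; case/andP: (W_perp j jn).
  by split => //; apply/forallP; rewrite -unitmx_pivots.
have W_unit : W \in unitmx by rewrite unitmx_pivots //; apply/forallP.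
have perpE j : (j <= m)%N -> (perpmx W (flagsp B j) == flagsp B (m - j))%MS.
  exact: perpmx_flagsp.
split; first by []; split; [|split].
- move=> j jn; apply/matrixP => a b; rewrite flag_gram_entry [RHS]mxE.
  by case: ifP => // /andP [aj bj]; rewrite -gramNE W_anti //; lia.
- move=> j /andP [nj jm]; apply: submx_trans (flagsp_mono B (_ : m - j <= j)%N); last by lia.
  by case/andP: (perpE j jm).
- by move=> j jn; apply: perpE; lia.
Qed.

Lemma pivot_comb W1 W2 s t i :
  pivot (s *: W1 + t *: W2) i = s * pivot W1 i + t * pivot W2 i.
Proof. exact: gramN_comb. Qed.

Lemma induced_orientation_pivots W (j : 'I_n) : W^T = - W -> antitriangular W ->
  induced_orientation B W j =
  (0 < (-1) ^+ antidiag_perm (n - j) * \prod_(i < n - j) pivot W (j + i)).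
Proof.
move=> W_skew W_anti; have jn := ltn_ord j.
rewrite /induced_orientation wedge_top_antitriangular.
- rewrite pmulrn_lgt0 ?antidiagonal_count_gt0 //; congr (0 < _ * _); apply: eq_bigr => i _.
  rewrite /pivot /gramN (_ : j + ((2 * (n - j)).-1 - i) = m.-1 - (j + i))%N //.
  by have := ltn_ord i; lia.
- by move=> a b am bm ab; apply: W_anti; lia.
- by move=> a b am bm; apply: (gramN_skew W_skew); lia.
Qed.

Definition neg_parity W j := \big[addb/false]_(i < n - j) (pivot W (j + i) < 0).

Lemma induced_orientation_parity W (j : 'I_n) : Omega B W ->
  induced_orientation B W j = ~~ (odd_perm (antidiag_perm (n - j)) (+) neg_parity W j).
Proof.
move=> /OmegaE [W_skew W_anti W_piv].
have piv_neq0 (i : 'I_(n - j)) : pivot W (j + i) != 0.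
  have ji : (j + i < n)%N by have := ltn_ord i; lia.
  exact: (W_piv (Ordinal ji)).
have prod_neq0 : \prod_(i < n - j) pivot W (j + i) != 0 by apply/prodf_neq0 => i _.
rewrite induced_orientation_pivots // ltNge le_eqVlt mulf_eq0 signr_eq0 (negbTE prod_neq0).
by rewrite mulr_lt0 signr_eq0 prod_neq0 signr_lt0 prod_lt0.
Qed.

Lemma neg_parity_rec W (i : 'I_n) : (pivot W i < 0) = neg_parity W i (+) neg_parity W i.+1.
Proof.
rewrite /neg_parity (_ : n - i = (n - i.+1).+1)%N; last by have := ltn_ord i; lia.
rewrite big_ord_recl /= addn0 -addbA.
rewrite (eq_bigr (fun k : 'I_(n - i.+1) => pivot W (i.+1 + k)%N < 0)) ?addbb ?addbF // => k _.
by rewrite /= /bump /= add1n addnS.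
Qed.

Definition same_signs W1 W2 := forall i : 'I_n, (pivot W1 i < 0) = (pivot W2 i < 0).

Lemma orientations_same_signs W1 W2 : Omega B W1 -> Omega B W2 ->
  (forall j : 'I_n, induced_orientation B W1 j = induced_orientation B W2 j) <->
  same_signs W1 W2.
Proof.
move=> W1_Om W2_Om.
have -> : (forall j : 'I_n, induced_orientation B W1 j = induced_orientation B W2 j) <->
          (forall j : 'I_n, neg_parity W1 j = neg_parity W2 j).
  split=> eq_j j; have := eq_j j; rewrite !induced_orientation_parity //.
    by move/negb_inj/addbI.
  by move=> ->.
split => [eq_parity i|same j].
  have eq_parity' k : (k <= n)%N -> neg_parity W1 k = neg_parity W2 k.
    rewrite leq_eqVlt => /orP [/eqP ->|kn]; first by rewrite /neg_parity subnn !big_ord0.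
    exact: (eq_parity (Ordinal kn)).
  by rewrite !neg_parity_rec !eq_parity' //; have := ltn_ord i; lia.
apply: eq_bigr => i _; have ji : (j + i < n)%N by have := ltn_ord i; lia.
exact: (same (Ordinal ji)).
Qed.

Definition antidiag_gram (d : nat -> R) : 'M[R]_m :=
  \matrix_(x, y) (if (x + y == m.-1)%N then (if (x < n)%N then d x else - d y) else 0).
Definition antidiag_form (d : nat -> R) : 'M[R]_m := invmx B *m antidiag_gram d *m invmx B^T.

Lemma antidiag_form_Omega (d : nat -> R) : (forall i : 'I_n, d i != 0) ->
  Omega B (antidiag_form d) /\ forall i : 'I_n, pivot (antidiag_form d) i = d i.
Proof.
move=> d_neq0; set W := antidiag_form d.
have gramW : gram W = antidiag_gram d.
  by rewrite /gram /W /antidiag_form !mulmxA mulmxV // mul1mx -mulmxA mulVmx ?unitmx_tr // mulmx1.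
have gramNW a b : (a < m)%N -> (b < m)%N ->
    gramN W a b = if (a + b == m.-1)%N then (if (a < n)%N then d a else - d b) else 0.
  by move=> am bm; rewrite (gramNE W (Ordinal am) (Ordinal bm)) gramW mxE.
have pivotW (i : 'I_n) : pivot W i = d i.
  have i_n := ltn_ord i; rewrite /pivot gramNW; [|lia|lia].
  by rewrite (_ : i + (m.-1 - i) == m.-1)%N ?i_n //; apply/eqP; lia.
split => //; apply/OmegaE; split.
- have gram_skew : (antidiag_gram d)^T = - antidiag_gram d.
    apply/matrixP => x y; rewrite !mxE addnC; case: eqP => xy; last by rewrite oppr0.
    have := ltn_ord x; have := ltn_ord y.
    by case: (ltnP x n) => xn; case: (ltnP y n) => yn; rewrite ?opprK //; lia.
  by rewrite /W /antidiag_form !trmx_mul !trmx_inv trmxK gram_skew mulNmx mulmxN mulmxA.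
- by move=> a b am bm ab; rewrite gramNW //; case: eqP => // ?; lia.
- by move=> i; rewrite pivotW.
Qed.

(* Every n-tuple of orientations is induced: take the anti-diagonal form whose
   pivot signs are the successive differences of the prescribed parities. *)
Lemma orientations_surjective (o : 'I_n -> bool) :
  exists W, Omega B W /\ forall j : 'I_n, induced_orientation B W j = o j.
Proof.
pose p (j : nat) : bool :=
  oapp (fun jj : 'I_n => ~~ o jj (+) odd_perm (antidiag_perm (n - jj))) false (insub j).
have p_n : p n = false by rewrite /p insubF ?ltnn.
pose d (i : nat) : R := (-1) ^+ (p i (+) p i.+1).
have [W_Om W_piv] := @antidiag_form_Omega d (fun i => negbT (signr_eq0 _ _)).
exists (antidiag_form d); split => // j.
rewrite induced_orientation_parity //.
have -> : neg_parity (antidiag_form d) j = p j.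
  rewrite /neg_parity (eq_bigr (fun i : 'I_(n - j) => p (j + i)%N (+) p (j + i).+1)) => [|i _].
    by rewrite telescope_addb subnKC ?(ltnW (ltn_ord j)) // p_n addbF.
  have ji : (j + i < n)%N by have := ltn_ord i; lia.
  by rewrite (W_piv (Ordinal ji)) /d signr_lt0.
by rewrite /p valK /= addbCA addbb addbF negbK.
Qed.

(* A convex combination of two forms of Omega(F) with the same pivot signs
   stays in Omega(F), with the same pivot signs: the pivots are linear. *)
Lemma Omega_convex_comb W1 W2 t : Omega B W1 -> Omega B W2 -> same_signs W1 W2 ->
  0 <= t <= 1 -> Omega B (t *: W1 + (1 - t) *: W2) /\ same_signs (t *: W1 + (1 - t) *: W2) W1.
Proof.
move=> /OmegaE [skew1 anti1 piv1] /OmegaE [skew2 anti2 piv2] same t01.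
have comb_sign i := convex_comb_same_sign t01 (piv1 i) (piv2 i) (same i).
split; last by move=> i; rewrite pivot_comb; case: (comb_sign i).
apply/OmegaE; split.
- by rewrite linearD !linearZ /= skew1 skew2 !scalerN opprD.
- by move=> a b am bm ab; rewrite gramN_comb anti1 ?anti2 // !mulr0 addr0.
- by move=> i; rewrite pivot_comb; case: (comb_sign i).
Qed.

Local Open Scope classical_set_scope.

(* Two forms of Omega(F) are in the same connected component iff their
   pivots have the same signs: pivots are continuous and never vanish on
   Omega(F), while the segment between forms of the same signs stays inside. *)
Lemma component_same_signs W1 W2 : Omega B W1 -> Omega B W2 ->
  connected_component (Omega B) W1 W2 <-> same_signs W1 W2.
Proof.
move=> W1_Om W2_Om; split => [comp i|same].
  apply: (@connected_component_sign _ R (Omega B) (fun W => pivot W i) _ _ _ _ comp).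
    exact: bilinear_continuous.
  by move=> W /OmegaE [_ _]; apply.
exists ((fun t : R => t *: W1 + (1 - t) *: W2) @` `[0, 1]); last first.
  by exists 0; rewrite ?scale0r ?add0r ?subr0 ?scale1r //= in_itv /= lexx ler01.
split; last exact: segment_image_connected.
  by exists 1; rewrite ?scale1r ?subrr ?scale0r ?addr0 //= in_itv /= lexx ler01.
move=> _ [t t01 <-]; rewrite /= in_itv /= in t01.
by have [] := Omega_convex_comb W1_Om W2_Om same t01.
Qed.

Lemma component_convex W : Omega B W ->
  convex_set (connected_component (Omega B) W : set (convex_lmodType 'M[R]_m)).
Proof.
move=> W_Om x y l; rewrite !in_setE => Cx Cy.
have x_Om := connected_component_sub Cx; have y_Om := connected_component_sub Cy.
have same_x := (component_same_signs W_Om x_Om).1 Cx.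
have same_y := (component_same_signs W_Om y_Om).1 Cy.
have same_xy : same_signs x y by move=> i; rewrite -same_x -same_y.
have l01 : 0 <= l%:num <= 1 by rewrite ge0 le1.
have [comb_Om same_comb] := Omega_convex_comb x_Om y_Om same_xy l01.
apply/(component_same_signs W_Om comb_Om) => i.
by rewrite same_x -same_comb.
Qed.

End FlagAdaptedGram.

Local Open Scope classical_set_scope.

Theorem lemma3p9 (R : realType) (n : nat) (B : 'M[R]_(2 * n)) (hB : B \in unitmx) :
  (* two forms lie in the same connected component iff they induce the same orientations *)
  (forall W1 W2, Omega B W1 -> Omega B W2 ->
     (connected_component (Omega B : set 'M[R]_(2 * n)) W1 W2 <->
      forall j : 'I_n, induced_orientation B W1 j = induced_orientation B W2 j))
  (* every n-tuple of orientations occurs *)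
  /\ (forall o : 'I_n -> bool, exists W, Omega B W /\
        forall j : 'I_n, induced_orientation B W j = o j)
  (* each connected component is convex *)
  /\ (forall W, Omega B W ->
        convex_set (connected_component (Omega B : set 'M[R]_(2 * n)) W : set (convex_lmodType 'M[R]_(2 * n)))).
Proof.
split.
  move=> W1 W2 W1_Om W2_Om.
  rewrite (component_same_signs hB W1_Om W2_Om) (orientations_same_signs hB W1_Om W2_Om).
  exact: iff_refl.
split; first exact: orientations_surjective.
exact: component_convex.
Qed.
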